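(* Let $(X,d)$ be a complete metric space and let $G:X\times X\to X$ be a mapping such that (a) $G(x,x)=x$ for all $x\in X$, and (b) for $x,y\in X$, $G(x,y)=x$ implies $y=x$. Let $T:X\to P_{cl}(X)$ be a multivalued operator with $SFix(T)\neq\emptyset$ and let $T_G(x)=\{G(x,u):u\in T(x)\}$ be the admissible perturbation of $T$ corresponding to $G$. Suppose there exist $\alpha,\beta,\gamma\ge0$ with $\alpha+\beta+\gamma<1$ such that $$H(T_G(x),T_G(y))\le\alpha d(x,y)+\beta D(x,T_G(y))+\gamma D(y,T_G(x))\quad\text{for all }x,y\in X,$$ so that $SFix(T)=\{x^*\}$ for some $x^*$, and suppose there exists $l\in(0,1)$ such that $H(T(x),\{x^*\})\le l\,H(T_G(x),\{x^*\})$ for all $x\in X$. Then $T$ is a quasi-contraction: there exists $q\in(0,1)$ such that $H(T(x),\{x^*\})\le q\,d(x,x^* )$ for all $x^*\in SFix(T)$ and all $x\in X$.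
   Context: $P_{cl}(X)$ is the family of nonempty closed subsets of $X$; $SFix(T)=\{x:T(x)=\{x\}\}$. For nonempty $A,B\subseteq X$: $D(a,B)=\inf_{b\in B}d(a,b)$, $e(A,B)=\sup_{a\in A}D(a,B)$, $H(A,B)=\max\{e(A,B),e(B,A)\}$. *)

From Stdlib Require Import Reals.
From Coquelicot Require Import Rbar Lub.
Open Scope R_scope.

Section Metric.
Variable X : Type.
Variable d : X -> X -> R.

Definition is_metric : Prop :=
  (forall x y, 0 <= d x y) /\
  (forall x y, d x y = 0 <-> x = y) /\
  (forall x y, d x y = d y x) /\
  (forall x y z, d x z <= d x y + d y z).

Definition cauchy_seq (u : nat -> X) : Prop :=
  forall eps, 0 < eps -> exists N, forall m n, (N <= m)%nat -> (N <= n)%nat ->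
    d (u m) (u n) < eps.

Definition seq_converges_to (u : nat -> X) (l : X) : Prop :=
  forall eps, 0 < eps -> exists N, forall n, (N <= n)%nat -> d (u n) l < eps.

Definition complete : Prop :=
  forall u, cauchy_seq u -> exists l, seq_converges_to u l.

Definition nonempty (A : X -> Prop) : Prop := exists a, A a.

Definition closed (A : X -> Prop) : Prop :=
  forall x, (forall eps, 0 < eps -> exists a, A a /\ d x a < eps) -> A x.

Definition P_cl (A : X -> Prop) : Prop := nonempty A /\ closed A.

Definition singleton (x : X) : X -> Prop := fun y => y = x.

(* D(a,B) = inf_{b in B} d(a,b); real-valued (finite for nonempty B) *)
Definition Dist (a : X) (B : X -> Prop) : R :=
  real (Glb_Rbar (fun r => exists b, B b /\ r = d a b)).

Definition exc (A B : X -> Prop) : Rbar :=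
  Lub_Rbar (fun r => exists a, A a /\ r = Dist a B).

Definition Rbar_maximum (a b : Rbar) : Rbar := if Rbar_le_dec a b then b else a.
Definition Haus (A B : X -> Prop) : Rbar := Rbar_maximum (exc A B) (exc B A).

Definition SFix (T : X -> X -> Prop) (x : X) : Prop :=
  forall y, T x y <-> y = x.

Definition TG (G : X -> X -> X) (T : X -> X -> Prop) (x : X) : X -> Prop :=
  fun z => exists u, T x u /\ z = G x u.
End Metric.
Arguments is_metric {X}. Arguments cauchy_seq {X}. Arguments seq_converges_to {X}.
Arguments complete {X}. Arguments nonempty {X}. Arguments closed {X}.
Arguments P_cl {X}. Arguments singleton {X}. Arguments Dist {X}.
Arguments exc {X}. Arguments Haus {X}. Arguments SFix {X}. Arguments TG {X}.

From Stdlib Require Import Reals.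
From Coquelicot Require Import Rbar Lub.
From Stdlib Require Import Lra FunctionalExtensionality PropExtensionality.
Open Scope R_scope.

(* At a strict fixed point [xs] of [T] the perturbation [T_G] is again [{xs}], so
   the contraction condition at [(x, xs)] reads
   [h <= alpha d(x,xs) + beta d(x,xs) + gamma D(xs, T_G x) <= (alpha + beta) d(x,xs) + gamma h]
   with [h = H(T_G x, {xs})]; since [alpha + beta + gamma < 1] this forces [h <= d(x,xs)],
   and the hypothesis on [l] gives [H(T x, {xs}) <= l d(x,xs)].  The same inequality
   at a pair of strict fixed points shows that [xs] is the only one, so [q = l]. *)

Lemma Lub_Rbar_singleton (E : R -> Prop) (c : R) :
  (forall r, E r <-> r = c) -> Lub_Rbar E = Finite c.
Proof.
  intros HE. apply is_lub_Rbar_unique. split.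
  - intros r Hr. apply HE in Hr. subst r. apply Rbar_le_refl.
  - intros b Hb. apply Hb, HE. reflexivity.
Qed.

Lemma Glb_Rbar_singleton (E : R -> Prop) (c : R) :
  (forall r, E r <-> r = c) -> Glb_Rbar E = Finite c.
Proof.
  intros HE. apply is_glb_Rbar_unique. split.
  - intros r Hr. apply HE in Hr. subst r. apply Rbar_le_refl.
  - intros b Hb. apply Hb, HE. reflexivity.
Qed.

Lemma Rbar_le_maximum_r (a b : Rbar) : Rbar_le b (Rbar_maximum a b).
Proof.
  unfold Rbar_maximum. destruct (Rbar_le_dec a b) as [_ | Hab].
  - apply Rbar_le_refl.
  - destruct a, b; simpl in *; tauto || lra.
Qed.

Lemma Rbar_mult_le_Finite (l m c : R) (h : Rbar) :
  0 <= l -> Rbar_le (Finite m) h -> Rbar_le h (Finite c) ->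
  Rbar_le (Rbar_mult (Finite l) h) (Finite (l * c)).
Proof.
  intros Hl H0 Hc. destruct h as [r | |]; simpl in *; try tauto.
  now apply Rmult_le_compat_l.
Qed.

Section SingletonDistances.

Context {X : Type} (d : X -> X -> R).

Lemma Dist_singleton (a b : X) : Dist d a (singleton b) = d a b.
Proof.
  unfold Dist. rewrite (Glb_Rbar_singleton _ (d a b)); [reflexivity |].
  intros r; split.
  - intros [b' [-> ->]]. reflexivity.
  - intros ->. exists b. split; reflexivity.
Qed.

Lemma exc_singleton_l (a : X) (B : X -> Prop) :
  exc d (singleton a) B = Finite (Dist d a B).
Proof.
  apply Lub_Rbar_singleton. intros r; split.
  - intros [a' [-> ->]]. reflexivity.
  - intros ->. exists a. split; reflexivity.
Qed.

Lemma Dist_le_Haus_singleton (A : X -> Prop) (b : X) :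
  Rbar_le (Finite (Dist d b A)) (Haus d A (singleton b)).
Proof.
  unfold Haus. rewrite <- exc_singleton_l. apply Rbar_le_maximum_r.
Qed.

Lemma Haus_singletons (a b : X) :
  (forall x y, d x y = d y x) ->
  Haus d (singleton a) (singleton b) = Finite (d a b).
Proof.
  intros hsym. unfold Haus. rewrite !exc_singleton_l, !Dist_singleton, (hsym b a).
  unfold Rbar_maximum. destruct Rbar_le_dec; reflexivity.
Qed.

End SingletonDistances.

Lemma TG_SFix {X : Type} (G : X -> X -> X) (T : X -> X -> Prop) (x : X) :
  (forall y, G y y = y) -> SFix T x -> TG G T x = singleton x.
Proof.
  intros hGa hx. apply functional_extensionality; intros z.
  apply propositional_extensionality. unfold TG, singleton. split.
  - intros [u [Hu ->]]. apply hx in Hu. subst u. apply hGa.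
  - intros ->. exists x. split; [apply hx; reflexivity | symmetry; apply hGa].
Qed.

Section ReichPerturbation.

Context {X : Type} {d : X -> X -> R} {G : X -> X -> X} {T : X -> X -> Prop}.
Context {alpha beta gamma : R}.
Hypothesis hmetric : is_metric d.
Hypothesis hGa : forall x, G x x = x.
Hypotheses (ha : 0 <= alpha) (hb : 0 <= beta) (hg : 0 <= gamma).
Hypothesis habg : alpha + beta + gamma < 1.
Hypothesis hcontr : forall x y,
  Rbar_le (Haus d (TG G T x) (TG G T y))
          (Finite (alpha * d x y + beta * Dist d x (TG G T y)
                   + gamma * Dist d y (TG G T x))).

Lemma SFix_unique (x y : X) : SFix T x -> SFix T y -> x = y.
Proof.
  destruct hmetric as [hpos [hzero [hsym _]]]. intros hx hy.
  apply hzero. specialize (hcontr x y).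
  rewrite (TG_SFix G T x), (TG_SFix G T y), Haus_singletons, !Dist_singleton, (hsym y x)
    in hcontr by assumption.
  simpl in hcontr. specialize (hpos x y). nra.
Qed.

Lemma Haus_TG_SFix_le (xs x : X) :
  SFix T xs -> Rbar_le (Haus d (TG G T x) (singleton xs)) (Finite (d x xs)).
Proof.
  destruct hmetric as [hpos _]. intros hxs.
  specialize (hcontr x xs).
  rewrite (TG_SFix G T xs), Dist_singleton in hcontr by assumption.
  pose proof (Dist_le_Haus_singleton d (TG G T x) xs) as Hge.
  destruct (Haus d (TG G T x) (singleton xs)) as [h | |]; simpl in *; try tauto.
  specialize (hpos x xs). nra.
Qed.

End ReichPerturbation.

Theorem mainTheorem8 (X : Type) (d : X -> X -> R)
  (hmetric : is_metric d) (hcomplete : complete d)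
  (G : X -> X -> X)
  (hGa : forall x, G x x = x)
  (hGb : forall x y, G x y = x -> y = x)
  (T : X -> X -> Prop)
  (hT : forall x, P_cl d (T x))
  (alpha beta gamma : R)
  (ha : 0 <= alpha) (hb : 0 <= beta) (hg : 0 <= gamma)
  (habg : alpha + beta + gamma < 1)
  (hcontr : forall x y,
     Rbar_le (Haus d (TG G T x) (TG G T y))
             (Finite (alpha * d x y + beta * Dist d x (TG G T y)
                      + gamma * Dist d y (TG G T x))))
  (xs : X) (hxs : SFix T xs)
  (l : R) (hl0 : 0 < l) (hl1 : l < 1)
  (hl : forall x,
     Rbar_le (Haus d (T x) (singleton xs))
             (Rbar_mult (Finite l) (Haus d (TG G T x) (singleton xs)))) :
  exists q : R, 0 < q /\ q < 1 /\
    forall x0, SFix T x0 -> forall x,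
      Rbar_le (Haus d (T x) (singleton x0)) (Finite (q * d x x0)).
Proof.
  exists l. split; [exact hl0 | split; [exact hl1 |]].
  intros x0 hx0 x.
  rewrite (SFix_unique hmetric hGa habg hcontr _ _ hx0 hxs).
  eapply Rbar_le_trans; [apply hl |].
  apply Rbar_mult_le_Finite with (m := Dist d xs (TG G T x)); [lra | |].
  - apply Dist_le_Haus_singleton.
  - exact (Haus_TG_SFix_le hmetric hGa ha hb hg habg hcontr _ x hxs).
Qed.
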